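(* Let $\mathcal X$ be a nominal set and $N\subseteq\mathbb A$ finite. Let $b\in\mathbb A\setminus N$, and let $X\subseteq\mathcal X$ with $\mathrm{supp}(X)\subseteq N\cup\{b\}$. Then there exists an injective function $$f:\ \mathrm{orbs}_N\Big(\bigcup_{a\in\mathbb A\setminus N}(a\ b)\cdot X\Big)\to\mathrm{orbs}_{N\cup\{b\}}(X).$$
   Context: Fix a countably infinite set $\mathbb A$ of names. $\mathrm{Perm}$ is the group of finite permutations of $\mathbb A$. $(a\ b)$ denotes the transposition swapping $a$ and $b$ and fixing all other names. A nominal set is a set with a $\mathrm{Perm}$-action in which every element has finite support. $\mathrm{supp}$ denotes the least finite supporting set. Permutations act on subsets pointwise, $\pi\cdot X=\{\pi\cdot x\mid x\in X\}$. For finite $N\subseteq\mathbb A$ and $x\in\mathcal X$: - $\mathrm{orb}_N(x)=\{\pi\cdot x\mid\pi\in\mathrm{Perm},\ \pi(a)=a\ \forall a\in N\}$. For $S\subseteq\mathcal X$: - $\mathrm{orbs}_N(S)=\{\mathrm{orb}_N(x)\mid x\in S\}$. *)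

From mathcomp Require Import all_boot.
Set Implicit Arguments. Unset Strict Implicit. Unset Printing Implicit Defensive.

(* Names: the countably infinite set A is modelled by nat. *)
Definition atom := nat.

Record fperm := FPerm {
  pf : atom -> atom;
  pinv : atom -> atom;
  pfK : cancel pf pinv;
  pinvK : cancel pinv pf;
  pfin : exists s : seq atom, forall a, a \notin s -> pf a = a }.

Definition fperm_id : fperm.
Proof.
refine (@FPerm id id (fun _ => erefl) (fun _ => erefl) _).
by exists [::].
Defined.

Definition fperm_comp (p q : fperm) : fperm.
Proof.
refine (@FPerm (pf p \o pf q) (pinv q \o pinv p) _ _ _).
- by move=> x /=; rewrite pfK pfK.
- by move=> x /=; rewrite pinvK pinvK.
- case: (pfin p) => s Hs; case: (pfin q) => t Ht.
  exists (s ++ t) => a; rewrite mem_cat negb_or => /andP[as' at'] /=.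
  by rewrite Ht // Hs.
Defined.

Definition swap_fun (a b : atom) (c : atom) : atom :=
  if c == a then b else if c == b then a else c.

Lemma swap_funK a b : cancel (swap_fun a b) (swap_fun a b).
Proof.
move=> c; rewrite /swap_fun.
by repeat (case: eqP => /=; try congruence).
Qed.

Definition transp (a b : atom) : fperm.
Proof.
refine (@FPerm (swap_fun a b) (swap_fun a b) (swap_funK a b) (swap_funK a b) _).
exists [:: a; b] => c; rewrite !inE negb_or => /andP[ca cb].
by rewrite /swap_fun (negbTE ca) (negbTE cb).
Defined.

Definition fixes (p : fperm) (S : atom -> Prop) : Prop :=
  forall a, S a -> pf p a = a.

Record nominal := Nominal {
  carrier :> Type;
  act : fperm -> carrier -> carrier;
  act_id : forall x, act fperm_id x = x;
  act_comp : forall p q x, act (fperm_comp p q) x = act p (act q x);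
  act_finsupp : forall x, exists s : seq atom,
      forall p, fixes p (fun a => a \in s) -> act p x = x }.

Definition set_act (X : nominal) (p : fperm) (S : X -> Prop) : X -> Prop :=
  fun y => exists2 x, S x & y = act p x.

Definition supports_set (X : nominal) (A : atom -> Prop) (S : X -> Prop) : Prop :=
  forall p, fixes p A -> forall y, set_act p S y <-> S y.

Definition orb (X : nominal) (N : seq atom) (x : X) : X -> Prop :=
  fun y => exists2 p : fperm, fixes p (fun a => a \in N) & y = act p x.

Definition orbs (X : nominal) (N : seq atom) (S : X -> Prop) : (X -> Prop) -> Prop :=
  fun O => exists2 x, S x & O = orb N x.

Definition swap_union (X : nominal) (N : seq atom) (b : atom) (S : X -> Prop) : X -> Prop :=
  fun y => exists2 a : atom, a \notin N & set_act (transp a b) S y.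

(* Since a, b are not in N, the transposition (a b) fixes N, so every N-orbit of
   the union of the (a b) . X already contains an element x of X. Sending that
   orbit to the (N ∪ {b})-orbit of a chosen such x is injective, because
   (N ∪ {b})-orbits refine N-orbits. *)

From mathcomp Require Import all_boot.
From Stdlib Require Import ProofIrrelevance FunctionalExtensionality
  PropExtensionality ClassicalEpsilon.

Definition fperm_inv (p : fperm) : fperm.
Proof.
refine (@FPerm (pinv p) (pf p) (pinvK p) (pfK p) _).
case: (pfin p) => s Hs; exists s => a Ha.
by rewrite -{1}(Hs a Ha) pfK.
Defined.

Lemma fperm_eq (p q : fperm) : pf p =1 pf q -> p = q.
Proof.
move=> epq.
have einv : pinv p =1 pinv q by move=> a; rewrite -{1}(pinvK q a) -epq pfK.
move: (functional_extensionality _ _ epq) (functional_extensionality _ _ einv).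
case: p q {epq einv} => f g fK gK fin [f' g' fK' gK' fin'] /= ef eg.
subst f' g'; by rewrite (proof_irrelevance _ fK fK') (proof_irrelevance _ gK gK')
  (proof_irrelevance _ fin fin').
Qed.

Lemma act_invK (X : nominal) (p : fperm) : cancel (act p) (@act X (fperm_inv p)).
Proof.
move=> x; rewrite -act_comp.
have -> : fperm_comp (fperm_inv p) p = fperm_id by apply: fperm_eq => a /=; rewrite pfK.
exact: act_id.
Qed.

Section Fixes.

Variable A : atom -> Prop.

Lemma fixes_inv p : fixes p A -> fixes (fperm_inv p) A.
Proof. by move=> fixp a Aa /=; rewrite -{1}(fixp a Aa) pfK. Qed.

Lemma fixes_comp p q : fixes p A -> fixes q A -> fixes (fperm_comp p q) A.
Proof. by move=> fixp fixq a Aa /=; rewrite fixq // fixp. Qed.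

End Fixes.

Lemma fixes_transp (N : seq atom) a b :
  a \notin N -> b \notin N -> fixes (transp a b) (fun c => c \in N).
Proof.
move=> aN bN c cN /=; rewrite /swap_fun.
by case: eqP => [ca | _]; [rewrite -ca cN in aN | case: eqP => // cb; rewrite -cb cN in bN].
Qed.

Section Orbits.

Context {X : nominal}.

Lemma orb_refl N (x : X) : orb N x x.
Proof. by exists fperm_id; rewrite ?act_id. Qed.

Lemma orb_eq N (x y : X) : orb N x y -> orb N y = orb N x.
Proof.
case=> q fixq ->; apply: functional_extensionality => z.
apply: propositional_extensionality; split; case=> p fixp ->.
- by exists (fperm_comp p q); rewrite ?act_comp //; apply: fixes_comp.
- exists (fperm_comp p (fperm_inv q)); last by rewrite act_comp act_invK.
  by apply: fixes_comp => //; apply: fixes_inv.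
Qed.

Lemma orb_sub (M N : seq atom) (x y : X) :
  {subset N <= M} -> orb M x y -> orb N x y.
Proof. by move=> sNM [p fixp ->]; exists p => // a /sNM /fixp. Qed.

Lemma orb_eq_sub (M N : seq atom) (x y : X) :
  {subset N <= M} -> orb M x = orb M y -> orb N x = orb N y.
Proof.
move=> sNM eMxy; apply: orb_eq.
have : orb M y x by rewrite -eMxy; apply: orb_refl.
exact: orb_sub.
Qed.

Lemma orbs_swap_union (N : seq atom) b (S : X -> Prop) O :
  b \notin N -> orbs N (swap_union N b S) O -> exists x, S x /\ O = orb N x.
Proof.
move=> bN [_ [a aN [x Sx ->]] ->]; exists x; split => //.
by apply: orb_eq; exists (transp a b); last by []; apply: fixes_transp.
Qed.

End Orbits.

Theorem mainTheorem6 (X : nominal) (N : seq atom) (b : atom) (S : X -> Prop) :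
  b \notin N ->
  supports_set (fun a => a \in b :: N) S ->
  exists f : {O : X -> Prop | orbs N (swap_union N b S) O} ->
             {O : X -> Prop | orbs (b :: N) S O},
    injective f.
Proof.
move=> bN _.
pose rep (O : {O | orbs N (swap_union N b S) O}) :=
  constructive_indefinite_description _ (@orbs_swap_union X N b S _ bN (proj2_sig O)).
have repP O : S (proj1_sig (rep O)) /\ proj1_sig O = orb N (proj1_sig (rep O)).
  by case: (rep O).
exists (fun O => exist _ (orb (b :: N) (proj1_sig (rep O)))
  (ex_intro2 _ _ _ (proj1 (repP O)) erefl)).
move=> [O1 P1] [O2 P2] /(f_equal (@proj1_sig _ _)) /= eO.
apply: subset_eq_compat.
move: (proj2 (repP (exist _ O1 P1))) (proj2 (repP (exist _ O2 P2))) => /= -> ->.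
by apply: orb_eq_sub eO => a aN; rewrite inE aN orbT.
Qed.
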